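(* Let $\rho\in\Delta_{|\mathcal S|}$ have all entries positive. For any non-optimal policy $\pi$, there exists a non-optimal state-action pair $(\bar s,\bar a)$ such that $\pi(\bar a\mid\bar s)>0$ and $$A^{\pi^*}(\bar s,\bar a)\ge\frac{1-\gamma}{|\mathcal S||\mathcal A|}\big[f_\rho(\pi)-f_\rho(\pi^* )\big]>0.$$
   Context: An unregularized infinite-horizon discounted MDP: finite state space $\mathcal S$, finite action space $\mathcal A$, transition probabilities $\mathcal P(s'\mid s,a)$, cost $c:\mathcal S\times\mathcal A\to\mathbb R$, discount $\gamma\in[0,1)$. A policy $\pi$ assigns $\pi(\cdot\mid s)\in\Delta_{|\mathcal A|}$ to each state. $V^\pi(s)=\mathbb E[\sum_{t\ge0}\gamma^tc(s_t,a_t)\mid s_0=s,\ a_t\sim\pi(\cdot\mid s_t),\ s_{t+1}\sim\mathcal P(\cdot\mid s_t,a_t)]$, $Q^\pi(s,a)$ the same with $a_0=a$, and $A^\pi(s,a):=Q^\pi(s,a)-V^\pi(s)$. $\pi^*$ is a fixed optimal policy ($V^{\pi^*}(s)\le V^\pi(s)$ for all $\pi,s$). For $\rho\in\Delta_{|\mathcal S|}$, $f_\rho(\pi):=\sum_s\rho(s)V^\pi(s)$. A pair $(s,a)$ is non-optimal if $\pi^*(a\mid s)=0$; a policy $\pi$ is non-optimal if $f_\rho(\pi)-f_\rho(\pi^* )>0$. *)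

From HB Require Import structures.
From mathcomp Require Import all_boot all_order all_algebra.
From mathcomp Require Import all_classical all_reals topology normedtype sequences.
Set Implicit Arguments. Unset Strict Implicit. Unset Printing Implicit Defensive.
Import Order.TTheory GRing.Theory Num.Theory numFieldNormedType.Exports.
Local Open Scope ring_scope.

Section MDP.
Variables (R : realType) (S A : finType).

Definition is_distr (T : finType) (p : T -> R) : Prop :=
  (forall x, 0 <= p x) /\ \sum_(x : T) p x = 1.

Definition is_kernel (P : S -> A -> S -> R) : Prop :=
  forall s a, is_distr (P s a).

Definition is_policy (pi : S -> A -> R) : Prop :=
  forall s, is_distr (pi s).

Variables (P : S -> A -> S -> R) (c : S -> A -> R) (gamma : R).

Definition cost_pi (pi : S -> A -> R) (s : S) : R :=
  \sum_(a : A) pi s a * c s a.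

Definition trans_pi (pi : S -> A -> R) (s s' : S) : R :=
  \sum_(a : A) pi s a * P s a s'.

Fixpoint state_dist (pi : S -> A -> R) (t : nat) (s s' : S) : R :=
  match t with
  | O => if s == s' then 1 else 0
  | t'.+1 => \sum_(u : S) state_dist pi t' s u * trans_pi pi u s'
  end.

Definition exp_cost (pi : S -> A -> R) (t : nat) (s : S) : R :=
  \sum_(s' : S) state_dist pi t s s' * cost_pi pi s'.

Definition exp_cost_sa (pi : S -> A -> R) (t : nat) (s : S) (a : A) : R :=
  match t with
  | O => c s a
  | t'.+1 => \sum_(s1 : S) P s a s1 * exp_cost pi t' s1
  end.

Definition V (pi : S -> A -> R) (s : S) : R :=
  limn (fun n : nat => (\sum_(0 <= t < n) gamma ^+ t * exp_cost pi t s : R)).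

Definition Q (pi : S -> A -> R) (s : S) (a : A) : R :=
  limn (fun n : nat => (\sum_(0 <= t < n) gamma ^+ t * exp_cost_sa pi t s a : R)).

Definition Adv (pi : S -> A -> R) (s : S) (a : A) : R := Q pi s a - V pi s.

Definition f_rho (rho : S -> R) (pi : S -> A -> R) : R :=
  \sum_(s : S) rho s * V pi s.

End MDP.

From mathcomp Require Import all_boot all_order all_algebra.
From mathcomp Require Import all_classical all_reals topology normedtype sequences.
From mathcomp Require Import lra.
Import Order.TTheory GRing.Theory Num.Theory numFieldNormedType.Exports.
Set Implicit Arguments. Unset Strict Implicit. Unset Printing Implicit Defensive.
Local Open Scope ring_scope.
Local Open Scope classical_set_scope.

(* Write D := V^pi - V^pistar and g(s) := sum_a pi(a|s) A^pistar(s,a).  Since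
   Q^pistar(s,a) = c(s,a) + gamma E[V^pistar(s')], the difference D solves the
   fixed-point equation D = g + gamma P_pi D, and evaluating it at a maximiser
   of D gives (1 - gamma) D <= max g <= |A| max_(s,a) pi(a|s) A^pistar(s,a).
   Averaging over rho, the pair (sb, ab) maximising pi(a|s) A^pistar(s,a)
   therefore has both factors positive.  Optimality of pistar makes every
   advantage A^pistar nonnegative, and these average to zero under pistar
   itself, so pistar puts no mass on (sb, ab). *)

Section Distributions.
Variables (R : realType) (T : finType).
Implicit Types (p f : T -> R).

Lemma distr_le1 p : is_distr p -> forall x, p x <= 1.
Proof.
move=> [p_ge0 <-] x; rewrite (bigD1 x) //= lerDl.
by apply: sumr_ge0 => y _.
Qed.

Lemma distr_card_gt0 p : is_distr p -> (0 < #|T|)%N.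
Proof.
move=> [_ sum_p1]; rewrite lt0n; apply: contra_eqN sum_p1 => /eqP/card0_eq T0.
by rewrite big_pred0 ?(eq_sym 0) ?oner_neq0 // => x; rewrite T0.
Qed.

Lemma distr_avg_le p f M : is_distr p -> (forall x, f x <= M) ->
  \sum_x p x * f x <= M.
Proof.
move=> [p_ge0 sum_p1] f_le; rewrite -[leRHS]mul1r -sum_p1 mulr_suml.
by apply: ler_sum => x _; apply: ler_wpM2l.
Qed.

Lemma norm_distr_avg_le p f M : is_distr p -> (forall x, `|f x| <= M) ->
  `|\sum_x p x * f x| <= M.
Proof.
move=> p_distr f_le; apply: le_trans (ler_norm_sum _ _ _) _.
under eq_bigr => x _ do rewrite normrM (ger0_norm (p_distr.1 x)).
exact: distr_avg_le.
Qed.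

End Distributions.

Lemma cvg_sum (R : realType) (I : finType) (u : I -> nat -> R) (l : I -> R) :
  (forall i, u i n @[n --> \oo] --> l i) ->
  \sum_i u i n @[n --> \oo] --> \sum_i l i.
Proof. by move=> u_cvg; apply: (cvg_big add_continuous) => // i _; exact: u_cvg. Qed.

Lemma discounted_fixpoint_ub (R : realType) (S : finType) (gamma : R)
    (T : S -> S -> R) (D g : S -> R) (G : R) :
  0 <= gamma -> gamma < 1 -> (forall s, is_distr (T s)) ->
  (forall s, D s = g s + gamma * \sum_u T s u * D u) ->
  (forall s, g s <= G) -> forall s, (1 - gamma) * D s <= G.
Proof.
move=> g0 g1 T_distr D_fix g_le s.
have [s1 _ D_le] := arg_maxP D (isT : predT s).
apply: (@le_trans _ _ ((1 - gamma) * D s1)).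
  by apply: ler_wpM2l; [rewrite subr_ge0 ltW | exact: D_le].
have TD_le : \sum_u T s1 u * D u <= D s1 by apply: distr_avg_le => // u; exact: D_le.
rewrite mulrBl mul1r lerBlDr {1}D_fix lerD //.
exact: ler_wpM2l.
Qed.

Section PolicyEvaluation.
Variables (R : realType) (S A : finType).
Variables (P : S -> A -> S -> R) (c : S -> A -> R) (gamma : R).
Hypothesis P_kernel : is_kernel P.
Implicit Types (pi p q : S -> A -> R).

Lemma trans_pi_distr pi : is_policy pi -> forall s, is_distr (trans_pi P pi s).
Proof.
move=> pi_pol s; split=> [u|].
  by apply: sumr_ge0 => a _; apply: mulr_ge0; [exact: (pi_pol s).1 | exact: (P_kernel s a).1].
rewrite exchange_big /= -(pi_pol s).2; apply: eq_bigr => a _.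
by rewrite -mulr_sumr (P_kernel s a).2 mulr1.
Qed.

Lemma sum_state_dist0 pi s (f : S -> R) :
  \sum_u state_dist P pi 0 s u * f u = f s.
Proof.
rewrite (bigD1 s) //= eqxx mul1r big1 ?addr0 // => u /negbTE.
by rewrite eq_sym => ->; rewrite mul0r.
Qed.

Lemma state_distSl pi t s s' : state_dist P pi t.+1 s s' =
  \sum_u trans_pi P pi s u * state_dist P pi t u s'.
Proof.
elim: t s s' => [|t IH] s s'.
  transitivity (trans_pi P pi s s'); first exact: sum_state_dist0.
  rewrite (bigD1 s') //= eqxx mulr1 big1 ?addr0 // => u.
  by move=> /negbTE ->; rewrite mulr0.
transitivity (\sum_u state_dist P pi t.+1 s u * trans_pi P pi u s') => //.
under eq_bigr => u _ do rewrite IH mulr_suml.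
rewrite exchange_big /=; apply: eq_bigr => w _.
by rewrite mulr_sumr; apply: eq_bigr => u _; rewrite mulrA.
Qed.

Lemma exp_cost0 pi s : exp_cost P c pi 0 s = cost_pi c pi s.
Proof. exact: sum_state_dist0. Qed.

Lemma exp_costS pi t s :
  exp_cost P c pi t.+1 s = \sum_u trans_pi P pi s u * exp_cost P c pi t u.
Proof.
rewrite /exp_cost; under eq_bigr => s' _ do rewrite state_distSl mulr_suml.
rewrite exchange_big /=; apply: eq_bigr => u _.
by rewrite mulr_sumr; apply: eq_bigr => s' _; rewrite mulrA.
Qed.

Lemma exp_cost_avg pi t s :
  exp_cost P c pi t s = \sum_a pi s a * exp_cost_sa P c pi t s a.
Proof.
case: t => [|t]; first exact: exp_cost0.
rewrite exp_costS /trans_pi; under eq_bigr => u _ do rewrite mulr_suml.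
rewrite exchange_big /=; apply: eq_bigr => a _.
by rewrite mulr_sumr; apply: eq_bigr => u _; rewrite mulrA.
Qed.

Lemma norm_exp_cost_le pi M : is_policy pi -> (forall s a, `|c s a| <= M) ->
  forall t s, `|exp_cost P c pi t s| <= M.
Proof.
move=> pi_pol c_le; elim=> [|t IH] s.
  by rewrite exp_cost0; apply: norm_distr_avg_le.
by rewrite exp_costS; apply: norm_distr_avg_le => //; exact: trans_pi_distr.
Qed.

Definition V_partial pi s n := \sum_(0 <= t < n) gamma ^+ t * exp_cost P c pi t s.
Definition Q_partial pi s a n := \sum_(0 <= t < n) gamma ^+ t * exp_cost_sa P c pi t s a.

Hypotheses (gamma_ge0 : 0 <= gamma) (gamma_lt1 : gamma < 1).

Lemma V_partial_cvg pi s : is_policy pi -> V_partial pi s @ \oo --> V P c gamma pi s.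
Proof.
move=> pi_pol; apply: normed_cvg.
pose M := \big[Num.max/0]_(q : S * A) `|c q.1 q.2|.
have M_ge0 : 0 <= M by exact: bigmax_ge_id.
apply: (@series_le_cvg _ _ (geometric M gamma)).
- by move=> n; exact: normr_ge0.
- by move=> n /=; apply: mulr_ge0 => //; exact: exprn_ge0.
- move=> n /=; rewrite normrM ger0_norm ?exprn_ge0 // mulrC ler_wpM2r ?exprn_ge0 //.
  by apply: norm_exp_cost_le => // s' a; exact: (le_bigmax _ _ (s', a)).
- by apply: is_cvg_geometric_series; rewrite ger0_norm.
Qed.

Lemma Q_partialS pi s a n : Q_partial pi s a n.+1 =
  c s a + gamma * \sum_u P s a u * V_partial pi u n.
Proof.
rewrite /Q_partial big_nat_recl //= expr0 mul1r; congr (_ + _).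
under eq_bigr => t _ do rewrite exprS -mulrA mulr_sumr.
rewrite -mulr_sumr exchange_big /=; congr (_ * _); apply: eq_bigr => u _.
by rewrite mulr_sumr; apply: eq_bigr => t _; rewrite mulrCA.
Qed.

Lemma Q_partial_cvg pi s a : is_policy pi ->
  Q_partial pi s a @ \oo --> c s a + gamma * \sum_u P s a u * V P c gamma pi u.
Proof.
move=> pi_pol; rewrite -cvg_shiftS /=.
under eq_cvg do rewrite Q_partialS.
apply: cvgD; first exact: cvg_cst.
apply: cvgM; first exact: cvg_cst.
apply: cvg_sum => u; apply: cvgM; first exact: cvg_cst.
exact: V_partial_cvg.
Qed.

Lemma Q_bellman pi s a : is_policy pi ->
  Q P c gamma pi s a = c s a + gamma * \sum_u P s a u * V P c gamma pi u.
Proof. by move=> pi_pol; apply: cvg_lim => //; exact: Q_partial_cvg. Qed.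

Lemma V_avg_Q pi s : is_policy pi ->
  V P c gamma pi s = \sum_a pi s a * Q P c gamma pi s a.
Proof.
move=> pi_pol; suff : V_partial pi s @ \oo --> \sum_a pi s a * Q P c gamma pi s a.
  exact: cvg_lim.
have -> : V_partial pi s = fun n => \sum_a pi s a * Q_partial pi s a n.
  apply: funext => n; rewrite /V_partial.
  under eq_bigr => t _ do rewrite exp_cost_avg mulr_sumr.
  rewrite exchange_big /=; apply: eq_bigr => a _.
  by rewrite /Q_partial mulr_sumr; apply: eq_bigr => t _; rewrite mulrCA.
apply: cvg_sum => a; apply: cvgM; first exact: cvg_cst.
by rewrite (Q_bellman _ _ pi_pol); exact: Q_partial_cvg.
Qed.

Lemma sum_policy_Q p q u : is_policy q ->
  \sum_a p u a * Q P c gamma q u a =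
  cost_pi c p u + gamma * \sum_w trans_pi P p u w * V P c gamma q w.
Proof.
move=> q_pol; under eq_bigr => a _ do rewrite Q_bellman // mulrDr.
rewrite big_split /=; congr (_ + _).
rewrite /trans_pi; under [in RHS]eq_bigr => w _ do rewrite mulr_suml.
rewrite [in RHS]exchange_big [RHS]mulr_sumr /=; apply: eq_bigr => a _.
by rewrite mulrCA mulr_sumr; congr (_ * _); apply: eq_bigr => w _; rewrite mulrA.
Qed.

Lemma V_bellman pi s : is_policy pi ->
  V P c gamma pi s = cost_pi c pi s + gamma * \sum_u trans_pi P pi s u * V P c gamma pi u.
Proof. by move=> pi_pol; rewrite V_avg_Q // sum_policy_Q. Qed.

Lemma sum_policy_Adv pi s : is_policy pi -> \sum_a pi s a * Adv P c gamma pi s a = 0.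
Proof.
move=> pi_pol; under eq_bigr do rewrite mulrBr.
by rewrite sumrB -mulr_suml (pi_pol s).2 mul1r -V_avg_Q // subrr.
Qed.

Lemma V_sub_bellman p q s : is_policy p -> is_policy q ->
  V P c gamma p s - V P c gamma q s =
  \sum_a p s a * Adv P c gamma q s a +
  gamma * \sum_u trans_pi P p s u * (V P c gamma p u - V P c gamma q u).
Proof.
move=> p_pol q_pol; under eq_bigr do rewrite mulrBr.
rewrite sumrB -mulr_suml (p_pol s).2 mul1r sum_policy_Q // V_bellman //.
under [X in _ = _ + gamma * X]eq_bigr do rewrite mulrBr.
rewrite sumrB; lra.
Qed.

Lemma f_rho_sub_le rho pi q h : is_distr rho -> is_policy pi -> is_policy q ->
  (forall s a, pi s a * Adv P c gamma q s a <= h) ->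
  (1 - gamma) * (f_rho P c gamma rho pi - f_rho P c gamma rho q) <= #|A|%:R * h.
Proof.
move=> rho_distr pi_pol q_pol h_ge.
have V_sub_le := discounted_fixpoint_ub gamma_ge0 gamma_lt1 (trans_pi_distr pi_pol)
  (fun s => V_sub_bellman s pi_pol q_pol).
rewrite /f_rho -sumrB mulr_sumr; under eq_bigr do rewrite -mulrBr mulrCA.
apply: distr_avg_le => // s; apply: V_sub_le => u.
apply: le_trans (ler_sum _ (fun a _ => h_ge u a)) _.
by rewrite sumr_const mulr_natl.
Qed.

End PolicyEvaluation.

Section OptimalPolicy.
Variables (R : realType) (S A : finType).
Variables (P : S -> A -> S -> R) (c : S -> A -> R) (gamma : R).
Hypotheses (P_kernel : is_kernel P) (gamma_ge0 : 0 <= gamma) (gamma_lt1 : gamma < 1).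
Variable pistar : S -> A -> R.
Hypothesis pistar_pol : is_policy pistar.
Hypothesis pistar_opt : forall pi, is_policy pi ->
  forall s, V P c gamma pistar s <= V P c gamma pi s.

Definition switch_policy (q : S -> A -> R) (s0 : S) (a0 : A) : S -> A -> R :=
  fun s a => if s == s0 then (a == a0)%:R else q s a.

Lemma sum_switch_policy q s0 a0 (f : A -> R) :
  \sum_a switch_policy q s0 a0 s0 a * f a = f a0.
Proof.
rewrite /switch_policy eqxx (bigD1 a0) //= eqxx mul1r big1 ?addr0 // => a.
by move=> /negbTE ->; rewrite mul0r.
Qed.

Lemma switch_policy_pol q s0 a0 : is_policy q -> is_policy (switch_policy q s0 a0).
Proof.
move=> q_pol s; have [-> | ] := eqVneq s s0; last first.
  by rewrite /switch_policy => /negbTE ->; exact: q_pol.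
split=> [a|]; first by rewrite /switch_policy eqxx ler0n.
by under eq_bigr do rewrite -[switch_policy _ _ _ _ _]mulr1; rewrite sum_switch_policy.
Qed.

Lemma Adv_opt_ge0 s0 a0 : 0 <= Adv P c gamma pistar s0 a0.
Proof.
rewrite leNgt; apply/negP => Adv_lt0.
(* Playing a0 at s0 and pistar elsewhere would then beat pistar at s0. *)
pose p := switch_policy pistar s0 a0.
have p_pol : is_policy p by exact: switch_policy_pol.
have V_sub_fix u := V_sub_bellman c P_kernel gamma_ge0 gamma_lt1 u p_pol pistar_pol.
have avg_Adv_le0 u : \sum_a p u a * Adv P c gamma pistar u a <= 0.
  have [-> | /negbTE u_neq] := eqVneq u s0; first by rewrite sum_switch_policy ltW.
  by rewrite /p /switch_policy u_neq sum_policy_Adv.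
have V_sub_le0 u : V P c gamma p u - V P c gamma pistar u <= 0.
  have := discounted_fixpoint_ub gamma_ge0 gamma_lt1 (trans_pi_distr P_kernel p_pol)
    V_sub_fix avg_Adv_le0 u.
  by rewrite pmulr_rle0 // subr_gt0.
have tail_le0 : gamma * \sum_u trans_pi P p s0 u *
    (V P c gamma p u - V P c gamma pistar u) <= 0.
  apply: mulr_ge0_le0 => //; apply: sumr_le0 => u _.
  by apply: mulr_ge0_le0 => //; exact: (trans_pi_distr P_kernel p_pol s0).1.
have := V_sub_fix s0; rewrite sum_switch_policy.
have := pistar_opt p_pol s0; lra.
Qed.

Lemma opt_policy_eq0 s a : 0 < Adv P c gamma pistar s a -> pistar s a = 0.
Proof.
move=> Adv_gt0; apply/eqP.
have terms_ge0 b : true -> 0 <= pistar s b * Adv P c gamma pistar s b.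
  by move=> _; apply: mulr_ge0; [exact: (pistar_pol s).1 | exact: Adv_opt_ge0].
have /eqP := psumr_eq0P terms_ge0
  (sum_policy_Adv c P_kernel gamma_ge0 gamma_lt1 s pistar_pol) (i := a) isT.
by rewrite mulf_eq0 (gt_eqF Adv_gt0) orbF.
Qed.

End OptimalPolicy.

Theorem lemma3p7 (R : realType) (S A : finType)
  (P : S -> A -> S -> R) (c : S -> A -> R) (gamma : R)
  (hP : is_kernel P) (hg0 : 0 <= gamma) (hg1 : gamma < 1)
  (pistar : S -> A -> R) (hpistar : is_policy pistar)
  (hopt : forall (pi : S -> A -> R), is_policy pi ->
            forall s, V P c gamma pistar s <= V P c gamma pi s)
  (rho : S -> R) (hrho : is_distr rho) (hrho_pos : forall s, 0 < rho s)
  (pi : S -> A -> R) (hpi : is_policy pi)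
  (hnonopt : 0 < f_rho P c gamma rho pi - f_rho P c gamma rho pistar) :
  exists (sb : S) (ab : A),
    pistar sb ab = 0 /\ 0 < pi sb ab /\
    (1 - gamma) / (#|S|%:R * #|A|%:R)
      * (f_rho P c gamma rho pi - f_rho P c gamma rho pistar)
      <= Adv P c gamma pistar sb ab /\
    0 < (1 - gamma) / (#|S|%:R * #|A|%:R)
      * (f_rho P c gamma rho pi - f_rho P c gamma rho pistar).
Proof.
set Delta := f_rho P c gamma rho pi - f_rho P c gamma rho pistar.
set Adv_opt := Adv P c gamma pistar.
have S_gt0 := distr_card_gt0 hrho; have /card_gt0P [s0 _] := S_gt0.
have A_gt0 := distr_card_gt0 (hpi s0); have /card_gt0P [a0 _] := A_gt0.
have [[sb ab] _ max_ab] :=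
  arg_maxP (fun q : S * A => pi q.1 q.2 * Adv_opt q.1 q.2) (isT : predT (s0, a0)).
have one_sub_gamma_gt0 : 0 < 1 - gamma by rewrite subr_gt0.
have Delta_le : (1 - gamma) * Delta <= #|A|%:R * (pi sb ab * Adv_opt sb ab).
  by apply: f_rho_sub_le => // s a; exact: (max_ab (s, a)).
have /andP [pi_gt0 Adv_gt0] : (0 < pi sb ab) && (0 < Adv_opt sb ab).
  rewrite -mulr_ge0_gt0; [|exact: (hpi sb).1 | exact: Adv_opt_ge0].
  have A_pos : 0 < #|A|%:R :> R by rewrite ltr0n.
  by rewrite -(pmulr_rgt0 _ A_pos); apply: lt_le_trans Delta_le; exact: mulr_gt0.
have SA_gt0 : 0 < #|S|%:R * #|A|%:R :> R by rewrite mulr_gt0 ?ltr0n.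
exists sb, ab; split.
  exact: (opt_policy_eq0 hP hg0 hg1 hpistar hopt Adv_gt0).
split=> //; split; last by rewrite mulr_gt0 ?divr_gt0.
rewrite mulrAC ler_pdivrMr //; apply: le_trans Delta_le _.
rewrite [leRHS]mulrC -mulrA.
have S_ge1 : 1 <= #|S|%:R :> R by rewrite ler1n.
have A_Adv_ge0 : 0 <= #|A|%:R * Adv_opt sb ab by rewrite mulr_ge0 ?ler0n ?ltW.
apply: le_trans _ (ler_peMl A_Adv_ge0 S_ge1).
by apply/ler_wpM2l/ler_piMl; [exact: ler0n | exact: ltW | exact: distr_le1].
Qed.
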